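(* Let $d\ge1$, $a$, $b$ be integers and $x_0$ a real number. If $\pi(x;d,a)\ge\pi(x;d,b)$ for all $x\le x_0$, then for all $x\le x_0$ both $N(x;d,a)\ge N(x;d,b)$ and $\mu_{d,a}(x)\ge\mu_{d,b}(x)$.
   Context: $\pi(x;d,a)$ is the number of primes $p\le x$ with $p\equiv a\pmod d$. Let $S_{d,a}$ be the set of positive integers all of whose prime divisors $p$ satisfy $p\equiv a\pmod d$ (including $1$). Then $N(x;d,a)=\#\{n\le x: n\in S_{d,a}\}$ and $\mu_{d,a}(x)=\sum_{n\le x,\ n\in S_{d,a}}1/n$ (in the paper, $\mu_{g_{d,a}}(x)$ with $g_{d,a}$ the indicator of $S_{d,a}$). *)

From mathcomp Require Import all_boot all_order all_algebra.
From mathcomp Require Import reals.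
Set Implicit Arguments. Unset Strict Implicit. Unset Printing Implicit Defensive.
Import Order.TTheory GRing.Theory Num.Theory.
Local Open Scope ring_scope.

Definition congr_mod (d a : int) (p : nat) : bool := (p%:Z == a %[mod d])%Z.

(* n is in S_{d,a}: every prime divisor p of n satisfies p == a (mod d).
   (1 is in S_{d,a}; 0 is excluded separately by ranging over n >= 1.) *)
Definition inS (d a : int) (n : nat) : bool := all (congr_mod d a) (primes n).

(* floor of x for x >= 0, and 0 for x < 0: the integers 1 <= n <= x are exactly
   those 1 <= n <= truncn x. *)

Definition pi_count {R : realType} (d a : int) (x : R) : nat :=
  \sum_(0 <= p < (Num.truncn x).+1 | prime p && congr_mod d a p) 1%N.

Definition N_count {R : realType} (d a : int) (x : R) : nat :=
  \sum_(1 <= n < (Num.truncn x).+1 | inS d a n) 1%N.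

Definition mu {R : realType} (d a : int) (x : R) : R :=
  \sum_(1 <= n < (Num.truncn x).+1 | inS d a n) (n%:R)^-1.

From mathcomp Require Import all_boot all_order all_algebra.
From mathcomp Require Import reals.

(* Send the k-th prime congruent to b (mod d) to the k-th prime congruent to a;
   the hypothesis on the prime counts says that the latter is not larger.
   Extended completely multiplicatively, this map sends every n <= x in S_{d,b}
   injectively to some m <= n in S_{d,a}.  Hence, for every nonnegative
   nonincreasing weight w, the sum of w over S_{d,b} up to x is at most its sum
   over S_{d,a}; take w = 1 and w(n) = 1/n. *)

Set Implicit Arguments.
Unset Strict Implicit.
Unset Printing Implicit Defensive.

Import Order.TTheory GRing.Theory Num.Theory.

Lemma logn_prod (I : eqType) (r : nat) (s : seq I) (F : I -> nat) :
  (forall i, i \in s -> 0 < F i) ->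
  logn r (\prod_(i <- s) F i) = \sum_(i <- s) logn r (F i).
Proof.
elim: s => [|i s IHs] F_gt0; first by rewrite !big_nil logn1.
have F_gt0' j : j \in s -> 0 < F j by move=> js; rewrite F_gt0 // inE js orbT.
rewrite !big_cons lognM ?F_gt0 ?mem_head ?IHs //.
by rewrite big_seq_cond prodn_cond_gt0 // => j /andP[/F_gt0'].
Qed.

Lemma prod_primes_logn n : 0 < n -> \prod_(p <- primes n) p ^ logn p n = n.
Proof. by move=> n_gt0; rewrite [RHS](prod_prime_decomp n_gt0) prime_decompE big_map. Qed.

Section MultiplicativeExtension.

Variable g : nat -> nat.
Hypothesis g_prime : forall p, prime p -> prime (g p).

Definition mult_ext n := \prod_(p <- primes n) g p ^ logn p n.

Let g_pow_gt0 n p : p \in primes n -> 0 < g p ^ logn p n.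
Proof. by rewrite mem_primes => /andP[/g_prime/prime_gt0 gp_gt0 _]; rewrite expn_gt0 gp_gt0. Qed.

Lemma mult_ext_gt0 n : 0 < mult_ext n.
Proof. by rewrite /mult_ext big_seq_cond prodn_cond_gt0 // => p /andP[/g_pow_gt0]. Qed.

Lemma logn_mult_ext r n :
  logn r (mult_ext n) = \sum_(p <- primes n) (r == g p) * logn p n.
Proof.
rewrite /mult_ext logn_prod; last exact: g_pow_gt0.
apply: eq_big_seq => p; rewrite mem_primes => /andP[/g_prime gp _].
by rewrite lognX (logn_prime _ gp) mulnC.
Qed.

Lemma primes_mult_ext n : {subset primes (mult_ext n) <= map g (primes n)}.
Proof.
move=> r; rewrite -logn_gt0 logn_mult_ext; apply: contraTT => /mapP r_notin_g.
rewrite big1_seq // => p /andP[_ pn].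
by case: eqP => [r_gp|]; [case: r_notin_g; exists p | rewrite mul0n].
Qed.

Lemma mult_ext_le n : 0 < n -> (forall p, prime p -> g p <= p) -> mult_ext n <= n.
Proof.
move=> n_gt0 g_le; rewrite -[leqRHS]prod_primes_logn // /mult_ext.
rewrite big_seq [leqRHS]big_seq; apply: leq_prod => p pn.
by rewrite leq_exp2r ?logn_gt0 // g_le //; move: pn; rewrite mem_primes => /andP[].
Qed.

Variable D : pred nat.
Hypothesis g_inj : {in D &, injective g}.

Lemma logn_mult_ext_inj n p :
  {subset primes n <= D} -> p \in D -> logn (g p) (mult_ext n) = logn p n.
Proof.
move=> Dn Dp; rewrite logn_mult_ext.
have [pn | p_notin] := boolP (p \in primes n).
  rewrite (bigD1_seq p) ?primes_uniq //= eqxx mul1n big1_seq ?addn0 // => q /andP[qp qn].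
  by rewrite (inj_in_eq g_inj) ?Dp ?Dn // eq_sym (negbTE qp).
have /eqP -> : logn p n == 0 by rewrite -leqn0 leqNgt logn_gt0.
rewrite big1_seq // => q /andP[_ qn]; rewrite (inj_in_eq g_inj) ?Dp ?Dn //.
by case: (p =P q) => [pq | _]; [rewrite pq qn in p_notin | rewrite mul0n].
Qed.

Lemma mult_ext_inj m n : 0 < m -> 0 < n -> {subset primes m <= D} ->
  {subset primes n <= D} -> mult_ext m = mult_ext n -> m = n.
Proof.
move=> m_gt0 n_gt0 Dm Dn mult_ext_mn; apply: eqn_from_log => // p.
have [Dp | D'p] := boolP (p \in D).
  by rewrite -(logn_mult_ext_inj Dm Dp) -(logn_mult_ext_inj Dn Dp) mult_ext_mn.
have logn_eq0 k : {subset primes k <= D} -> logn p k = 0.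
  by move=> Dk; apply/eqP; rewrite -leqn0 leqNgt logn_gt0; apply: contra D'p => /Dk.
by rewrite !logn_eq0.
Qed.

End MultiplicativeExtension.

Section CountUpTo.

Variable A : pred nat.

Definition count_upto k := count A (iota 0 k.+1).

Lemma count_uptoE k : count_upto k = count A (iota 0 k) + A k.
Proof. by rewrite /count_upto -addn1 iotaD count_cat /= addn0. Qed.

Lemma count_upto_homo : {homo count_upto : i j / i <= j}.
Proof. by move=> i j ij; rewrite /count_upto -(subnKC ij) -addSn iotaD count_cat leq_addr. Qed.

Lemma count_upto_ltn i j : i < j -> A j -> count_upto i < count_upto j.
Proof.
case: j => // j; rewrite ltnS => ij Aj.
by rewrite [count_upto j.+1]count_uptoE Aj addn1 ltnS; apply: count_upto_homo.
Qed.

Lemma count_upto_inj : {in A &, injective count_upto}.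
Proof.
move=> i j Ai Aj count_ij; case: (ltngtP i j) => // [lt_ij | lt_ji].
  by have := count_upto_ltn lt_ij Aj; rewrite count_ij ltnn.
by have := count_upto_ltn lt_ji Ai; rewrite count_ij ltnn.
Qed.

Lemma count_upto_gt0 j : A j -> 0 < count_upto j.
Proof. by move=> Aj; rewrite count_uptoE Aj addn1. Qed.

Lemma reach_subproof v q : exists p, (v <= count_upto p) || (q <= p).
Proof. by exists q; rewrite leqnn orbT. Qed.

(* The least [p] with [v <= count_upto p]; the disjunct [q <= p] only makes the
   predicate satisfiable, and is harmless as long as [v <= count_upto q]. *)
Definition reach v q := ex_minn (reach_subproof v q).

Lemma reachP v q : 0 < v <= count_upto q ->
  [/\ reach v q <= q, A (reach v q) & count_upto (reach v q) = v].
Proof.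
case/andP=> v_gt0 v_le_q; rewrite /reach; case: ex_minnP => p reach_p p_min.
have le_pq : p <= q by apply: p_min; rewrite leqnn orbT.
have v_le_p : v <= count_upto p.
  by case/orP: reach_p => // le_qp; rewrite (@anti_leq p q) ?le_pq.
have below_p : count A (iota 0 p) < v.
  case: p {reach_p le_pq v_le_p} p_min => // p p_min.
  by rewrite ltnNge; apply/negP => v_le; have := p_min p; rewrite v_le ltnn => /(_ isT).
move: v_le_p; rewrite count_uptoE; case: (A p) => /= v_le_p.
  by split => //; apply/eqP; rewrite eqn_leq v_le_p addn1 below_p.
by rewrite addn0 leqNgt below_p in v_le_p.
Qed.

End CountUpTo.

Notation prime_count A := (count_upto (predI prime A)).

Section PrimeMatching.

Variables (A B : pred nat) (X : nat).
Hypothesis prime_count_le : forall k, k <= X -> prime_count B k <= prime_count A k.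

Definition matched_primes : pred nat := [pred q | [&& prime q, B q & q <= X]].

(* Sends the k-th prime of [B] to the k-th prime of [A]. *)
Definition match_prime q :=
  if q \in matched_primes then reach (predI prime A) (prime_count B q) q else q.

Lemma match_primeP q : q \in matched_primes ->
  [/\ match_prime q <= q, prime (match_prime q), A (match_prime q)
    & prime_count A (match_prime q) = prime_count B q].
Proof.
move=> Dq; rewrite /match_prime Dq; case/and3P: Dq => q_prime Bq le_qX.
have [] := @reachP (predI prime A) (prime_count B q) q.
  by rewrite count_upto_gt0 ?prime_count_le //= q_prime.
by move=> ? /andP[].
Qed.

Lemma match_prime_le q : match_prime q <= q.
Proof.
have [/match_primeP[] // | D'q] := boolP (q \in matched_primes).
by rewrite /match_prime (negbTE D'q).
Qed.

Lemma match_prime_prime p : prime p -> prime (match_prime p).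
Proof.
have [/match_primeP[] // | D'p] := boolP (p \in matched_primes).
by rewrite /match_prime (negbTE D'p).
Qed.

Lemma match_prime_inj : {in matched_primes &, injective match_prime}.
Proof.
have prime_B q : q \in matched_primes -> q \in predI prime B.
  by rewrite !inE => /and3P[-> ->].
move=> q q' Dq Dq' match_qq'; apply: (count_upto_inj (prime_B _ Dq) (prime_B _ Dq')).
by have [_ _ _ <-] := match_primeP Dq; have [_ _ _ <-] := match_primeP Dq'; rewrite match_qq'.
Qed.

Definition upto_supported P := [seq n <- index_iota 1 X.+1 | all P (primes n)].

Lemma mem_upto_supported P n :
  n \in upto_supported P = [&& 0 < n, n <= X & all P (primes n)].
Proof. by rewrite mem_filter mem_index_iota ltnS andbC andbA. Qed.

Lemma primes_upto_supported n :
  n \in upto_supported B -> {subset primes n <= matched_primes}.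
Proof.
rewrite mem_upto_supported => /and3P[n_gt0 le_nX /allP Bn] p pn.
have := pn; rewrite mem_primes => /and3P[p_prime _ p_dvd].
by rewrite !inE p_prime Bn // (leq_trans (dvdn_leq n_gt0 p_dvd)).
Qed.

Definition match_mult := mult_ext match_prime.

Lemma match_mult_le n : n \in upto_supported B -> 0 < match_mult n <= n.
Proof.
rewrite mem_upto_supported => /andP[n_gt0 _].
rewrite mult_ext_gt0 ?mult_ext_le // => [p _|]; [exact: match_prime_le | exact: match_prime_prime].
Qed.

Lemma match_mult_supported n :
  n \in upto_supported B -> match_mult n \in upto_supported A.
Proof.
move=> Sn; have /andP[match_gt0 le_match] := match_mult_le Sn.
have := Sn; rewrite !mem_upto_supported match_gt0 => /and3P[_ le_nX _].
rewrite (leq_trans le_match le_nX); apply/allP => r.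
move=> /(primes_mult_ext match_prime_prime)/mapP[p pn ->].
by have [] := match_primeP (primes_upto_supported Sn pn).
Qed.

Lemma match_mult_inj : {in upto_supported B &, injective match_mult}.
Proof.
move=> m n Sm Sn; have := Sm; have := Sn; rewrite !mem_upto_supported.
move=> /andP[n_gt0 _] /andP[m_gt0 _].
exact: (mult_ext_inj match_prime_prime match_prime_inj m_gt0 n_gt0
  (primes_upto_supported Sm) (primes_upto_supported Sn)).
Qed.

End PrimeMatching.

Local Open Scope ring_scope.

Lemma ler_sum_inj (R : numDomainType) (I J : eqType) (s : seq I) (t : seq J)
    (f : I -> J) (F : J -> R) :
  uniq s -> uniq t -> {in s &, injective f} -> {in s, forall i, f i \in t} ->
  {in t, forall j, 0 <= F j} -> \sum_(i <- s) F (f i) <= \sum_(j <- t) F j.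
Proof.
move=> s_uniq t_uniq f_inj f_st F_ge0.
rewrite -(big_map f xpredT) [leRHS](bigID (mem (map f s))) /=.
have -> : \sum_(j <- t | j \in map f s) F j = \sum_(j <- map f s) F j.
  rewrite -big_filter; apply: perm_big; apply: uniq_perm.
  - exact: filter_uniq.
  - by rewrite map_inj_in_uniq.
  by move=> j; rewrite mem_filter andb_idr // => /mapP[i si ->]; apply: f_st.
by rewrite lerDl big_seq_cond sumr_ge0 // => j /andP[/F_ge0].
Qed.

Theorem sum_le_of_prime_count_le (R : numDomainType) (A B : pred nat) (X : nat)
    (w : nat -> R) :
  (forall k, k <= X -> prime_count B k <= prime_count A k)%N ->
  (forall n, 0 <= w n) -> (forall m n, (0 < m <= n)%N -> w n <= w m) ->
  \sum_(1 <= n < X.+1 | all B (primes n)) w n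
    <= \sum_(1 <= n < X.+1 | all A (primes n)) w n.
Proof.
move=> count_le w_ge0 w_nonincr.
rewrite -[leLHS]big_filter -[leRHS]big_filter -/(upto_supported X B) -/(upto_supported X A).
apply: le_trans (_ : _ <= \sum_(n <- upto_supported X B) w (match_mult A B X n)) _.
  rewrite big_seq [leRHS]big_seq; apply: ler_sum => n Sn.
  exact/w_nonincr/match_mult_le.
apply: ler_sum_inj => //; rewrite ?filter_uniq ?iota_uniq //.
- exact: match_mult_inj.
- exact: match_mult_supported.
Qed.

Lemma pi_count_prime_count (R : realType) (d c : int) (x : R) :
  pi_count d c x = prime_count (congr_mod d c) (Num.truncn x).
Proof. by rewrite /pi_count sum1_count. Qed.

Theorem corollary1 (R : realType) (d a b : int) (x0 : R) :
  (1 <= d)%R ->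
  (forall x : R, x <= x0 -> (pi_count d b x <= pi_count d a x)%N) ->
  forall x : R, x <= x0 ->
    (N_count d b x <= N_count d a x)%N /\ mu d b x <= mu d a x.
Proof.
(* Only the prime counts matter. *)
move=> _ pi_le x le_x_x0.
have count_le k : (k <= Num.truncn x)%N ->
    (prime_count (congr_mod d b) k <= prime_count (congr_mod d a) k)%N.
  case: k => [//|k]; rewrite truncn_gt_nat => le_kx.
  by have := pi_le _ (le_trans le_kx le_x_x0); rewrite !pi_count_prime_count natrK.
split.
  by rewrite -(ler_nat R) !natr_sum; apply: sum_le_of_prime_count_le.
apply: sum_le_of_prime_count_le => // [n | m n /andP[m_gt0 le_mn]].
  by rewrite invr_ge0.
by rewrite lef_pV2 ?posrE ?ltr0n ?ler_nat // (leq_trans m_gt0).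
Qed.
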